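(* Let $A$ and $B$ be finite skew braces with $|A|=|B|$. If $A$ and $B$ are isoclinic, then $\Lambda(A)\cong\Lambda(B)$ and $\Theta(A)\cong\Theta(B)$ as graphs.
   Context: A skew brace is a triple $(A,+,\circ)$ where $(A,+)$ and $(A,\circ)$ are groups with $a\circ(b+c)=a\circ b-a+a\circ c$. $\lambda_a(b)=-a+a\circ b$, $a*b=\lambda_a(b)-b$, $[a,b]_+=a+b-a-b$; $\theta_{(a,b)}(c)=a+\lambda_b(c)-a$ is an action of $(A,+)\rtimes_\lambda(A,\circ)$ on $(A,+)$. $\operatorname{Soc}(A)=\ker\lambda\cap Z(A,+)$ and $\operatorname{Ann}(A)=\operatorname{Soc}(A)\cap Z(A,\circ)$ (an ideal). $A^2$ is the additive subgroup generated by all $a*b$, and $A'$ is the additive subgroup generated by $A^2$ and all $[a,b]_+$. Two skew braces $A,B$ are isoclinic if there exist a skew brace isomorphism $\xi\colon A/\operatorname{Ann}(A)\to B/\operatorname{Ann}(B)$ and a group isomorphism $\delta\colon (A',+)\to(B',+)$ such that for all $a,b\in A$ and all $a_1,b_1\in B$ with $\overline{a_1}=\xi(\overline a)$, $\overline{b_1}=\xi(\overline b)$ one has $\delta([a,b]_+)=[a_1,b_1]_+$ and $\delta(a*b)=a_1*b_1$. For a finite skew brace, $\Lambda(A)$ (resp. $\Theta(A)$) is the graph whose vertices are the $\lambda$-orbits (resp. $\theta$-orbits) of size $>1$, two distinct vertices $L_1,L_2$ adjacent iff $\gcd(|L_1|,|L_2|)\neq1$. *)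

From mathcomp Require Import all_boot.
Set Implicit Arguments. Unset Strict Implicit. Unset Printing Implicit Defensive.

Record skew_brace (T : finType) := SkewBrace {
  sadd : T -> T -> T;
  sopp : T -> T;
  szero : T;
  scirc : T -> T -> T;
  sinv : T -> T;
  sone : T;
  saddA : forall a b c, sadd a (sadd b c) = sadd (sadd a b) c;
  sadd0l : forall a, sadd szero a = a;
  saddNl : forall a, sadd (sopp a) a = szero;
  scircA : forall a b c, scirc a (scirc b c) = scirc (scirc a b) c;
  scirc1l : forall a, scirc sone a = a;
  scircVl : forall a, scirc (sinv a) a = sone;
  sbrace : forall a b c,
    scirc a (sadd b c) = sadd (sadd (scirc a b) (sopp a)) (scirc a c)
}.

Section Defs.
Variables (T : finType) (A : skew_brace T).

Local Notation "a + b" := (sadd A a b).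
Local Notation "- a" := (sopp A a).
Local Notation "a \o b" := (scirc A a b).

Definition lam (a b : T) : T := - a + (a \o b).
Definition sstar (a b : T) : T := lam a b + - b.
Definition acomm (a b : T) : T := a + b + - a + - b.
Definition theta (a b c : T) : T := a + lam b c + - a.

(* Ann(A) = Soc(A) cap Z(A,o), Soc(A) = ker lambda cap Z(A,+) *)
Definition Ann : {set T} :=
  [set a | [forall b, [&& lam a b == b, a + b == b + a & a \o b == b \o a]]].

(* the class of a in A/Ann(A), as a coset a + Ann(A) *)
Definition acoset (a : T) : {set T} := [set a + z | z in Ann].
Definition quot : {set {set T}} := [set acoset a | a : T].

Definition add_gen (G : {set T}) (x : T) : Prop :=
  forall S : {set T},
    szero A \in S -> (forall u v, u \in S -> v \in S -> u + v \in S) ->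
    (forall u, u \in S -> - u \in S) -> G \subset S -> x \in S.

Definition derived (x : T) : Prop :=
  add_gen [set y | [exists a, exists b, (y == sstar a b) || (y == acomm a b)]] x.

Definition lam_orbit (c : T) : {set T} := [set lam a c | a : T].
Definition theta_orbit (c : T) : {set T} := [set theta a b c | a : T, b : T].

Definition LambdaV : {set {set T}} :=
  [set lam_orbit c | c in [pred c | 1 < #|lam_orbit c|]].
Definition ThetaV : {set {set T}} :=
  [set theta_orbit c | c in [pred c | 1 < #|theta_orbit c|]].

End Defs.

Definition orb_adj (T : finType) (L1 L2 : {set T}) : bool :=
  (L1 != L2) && (gcdn #|L1| #|L2| != 1).

Definition orb_graph_iso (TA TB : finType)
    (VA : {set {set TA}}) (VB : {set {set TB}}) : Prop :=
  exists f : {set TA} -> {set TB},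
    [/\ {in VA &, injective f}, f @: VA = VB &
        {in VA &, forall L1 L2, orb_adj (f L1) (f L2) = orb_adj L1 L2}].

(* Isoclinism of skew braces.  xi is a skew brace isomorphism
   A/Ann(A) -> B/Ann(B), given on cosets; delta is a group isomorphism
   (A',+) -> (B',+), given as a map TA -> TB restricted to A'. *)
Definition isoclinic (TA TB : finType) (A : skew_brace TA) (B : skew_brace TB)
  : Prop :=
  exists (xi : {set TA} -> {set TB}) (delta : TA -> TB),
  [/\
     [/\ (forall X, X \in quot A -> xi X \in quot B),
      {in quot A &, injective xi},
      (forall Y, Y \in quot B -> exists2 X, X \in quot A & xi X = Y) &
      (forall a b a1 b1, xi (acoset A a) = acoset B a1 ->
         xi (acoset A b) = acoset B b1 ->
         xi (acoset A (sadd A a b)) = acoset B (sadd B a1 b1)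
         /\ xi (acoset A (scirc A a b)) = acoset B (scirc B a1 b1))],
      [/\ (forall x, derived A x -> derived B (delta x)),
          (forall x y, derived A x -> derived A y -> delta x = delta y -> x = y),
          (forall y, derived B y -> exists2 x, derived A x & delta x = y) &
          (forall x y, derived A x -> derived A y ->
             delta (sadd A x y) = sadd B (delta x) (delta y))] &
      (forall a b a1 b1, xi (acoset A a) = acoset B a1 ->
         xi (acoset A b) = acoset B b1 ->
         delta (acomm A a b) = acomm B a1 b1 /\
         delta (sstar A a b) = sstar B a1 b1)].

From mathcomp Require Import all_boot.
Set Implicit Arguments. Unset Strict Implicit. Unset Printing Implicit Defensive.

(* Since the adjacency of two orbits only depends on their sizes, two such
   graphs are isomorphic as soon as they have equally many vertices of each
   size k > 1, i.e. as soon as equally many points have an orbit of size k.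
   For lambda, |lambda-orbit of c| = |{a * c}| and for theta,
   |theta-orbit of c| = |{[a, lambda_b c]_+ + b * c}|: after translation by
   -c, orbits consist of elements of A'.  Isoclinism then gives
     (1) corresponding points c ~ c1 (xi(c Ann A) = c1 Ann B) have orbits of
         equal sizes, since delta maps one set of generators bijectively
         onto the other;
     (2) orbit sizes are constant on cosets of Ann, so the number of points
         with orbit size k is |Ann| times a number of classes, and xi
         matches these classes; |Ann A| = |Ann B| because |A| = |B| and
         A/Ann(A), B/Ann(B) are in bijection. *)

(* Consequences of the left-handed group axioms used in skew_brace, stated
   for an arbitrary law so that they serve both (A,+) and (A,o). *)
Section GroupLaw.
Variables (G : Type) (op : G -> G -> G) (inv : G -> G) (e : G).
Hypotheses (opA : forall a b c, op a (op b c) = op (op a b) c)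
  (op1 : forall a, op e a = a) (opV : forall a, op (inv a) a = e).

Lemma grp_mulV a : op a (inv a) = e.
Proof.
have h : op a (inv a) = op (op (inv (inv a)) (inv a)) (op a (inv a)) by rewrite opV op1.
by rewrite h -opA (opA (inv a) a (inv a)) opV op1 opV.
Qed.

Lemma grp_mul1 a : op a e = a.
Proof. by rewrite -(opV a) opA grp_mulV op1. Qed.

Lemma grp_KV a b : op (inv a) (op a b) = b.
Proof. by rewrite opA opV op1. Qed.

Lemma grp_VK a b : op a (op (inv a) b) = b.
Proof. by rewrite opA grp_mulV op1. Qed.

Lemma grp_mulK a b : op (op a b) (inv b) = a.
Proof. by rewrite -opA grp_mulV grp_mul1. Qed.

Lemma grp_mulVK a b : op (op a (inv b)) b = a.
Proof. by rewrite -opA opV grp_mul1. Qed.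

Lemma grp_injl a : injective (op a).
Proof. by move=> x y h; rewrite -(grp_KV a x) h grp_KV. Qed.

Lemma grp_injr b : injective (op^~ b).
Proof. by move=> x y /= h; rewrite -(grp_mulK x b) h grp_mulK. Qed.

Lemma grp_inv_uniq a b : op a b = e -> b = inv a.
Proof. by move=> h; rewrite -(grp_KV a b) h grp_mul1. Qed.

Lemma grp_invK a : inv (inv a) = a.
Proof. by symmetry; apply: grp_inv_uniq; rewrite opV. Qed.

Lemma grp_invM a b : inv (op a b) = op (inv b) (inv a).
Proof. by symmetry; apply: grp_inv_uniq; rewrite -opA (opA b) grp_mulV op1 grp_mulV. Qed.

Lemma grp_inv1 : inv e = e.
Proof. by rewrite -[LHS]grp_mul1 opV. Qed.

Lemma grp_commV a b : op a b = op b a -> op (inv a) b = op b (inv a).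
Proof. by move=> h; rewrite -[LHS](grp_mulK _ a) -(opA (inv a) b a) -h grp_KV. Qed.

End GroupLaw.

Section SkewBraceTheory.
Variables (T : finType) (A : skew_brace T).
Local Notation "a + b" := (sadd A a b).
Local Notation "- a" := (sopp A a).
Local Notation "0" := (szero A).
Local Notation "a \o b" := (scirc A a b).
Local Notation ginv := (sinv A).

Local Notation addA := (@saddA T A).
Local Notation add0r := (@sadd0l T A).
Local Notation addNl := (@saddNl T A).
Local Notation circA := (@scircA T A).
Local Notation circVl := (@scircVl T A).

Lemma addNr a : a + - a = 0. Proof. exact: (grp_mulV addA add0r addNl). Qed.
Lemma addr0 a : a + 0 = a. Proof. exact: (grp_mul1 addA add0r addNl). Qed.
Lemma addKr a b : - a + (a + b) = b. Proof. exact: (grp_KV addA add0r addNl). Qed.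
Lemma addNKr a b : a + (- a + b) = b. Proof. exact: (grp_VK addA add0r addNl). Qed.
Lemma addrK a b : (a + b) + - b = a. Proof. exact: (grp_mulK addA add0r addNl). Qed.
Lemma addrNK a b : (a + - b) + b = a. Proof. exact: (grp_mulVK addA add0r addNl). Qed.
Lemma addrI a : injective (sadd A a). Proof. exact: (grp_injl addA add0r addNl). Qed.
Lemma addIr b : injective (fun x => x + b). Proof. exact: (grp_injr addA add0r addNl). Qed.
Lemma opp_uniq a b : a + b = 0 -> b = - a. Proof. exact: grp_inv_uniq addA add0r addNl a b. Qed.
Lemma oppK a : - - a = a. Proof. exact: (grp_invK addA add0r addNl). Qed.
Lemma oppD a b : - (a + b) = - b + - a. Proof. exact: (grp_invM addA add0r addNl). Qed.
Lemma opp0 : - 0 = 0. Proof. exact: (grp_inv1 addA add0r addNl). Qed.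
Lemma addC_oppl a b : a + b = b + a -> - a + b = b + - a.
Proof. exact: grp_commV addA add0r addNl a b. Qed.
Lemma circVr a : a \o ginv a = sone A. Proof. exact: (grp_mulV circA (@scirc1l T A) circVl). Qed.
Lemma circ1r a : a \o sone A = a. Proof. exact: (grp_mul1 circA (@scirc1l T A) circVl). Qed.
Lemma circC_invl a b : a \o b = b \o a -> ginv a \o b = b \o ginv a.
Proof. exact: grp_commV circA (@scirc1l T A) circVl a b. Qed.

Lemma circ0 a : a \o 0 = a.
Proof.
have := sbrace A a 0 0; rewrite add0r => h.
have : a \o 0 + 0 = a \o 0 + (- a + (a \o 0)) by rewrite addr0 addA -h.
by move/addrI => h2; rewrite -(addNKr a (a \o 0)) -h2 addr0.
Qed.

Lemma one0 : sone A = 0. Proof. by rewrite -(circ0 (sone A)) scirc1l. Qed.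
Lemma circ0l a : 0 \o a = a. Proof. by rewrite -one0 scirc1l. Qed.
Lemma circVr0 a : a \o ginv a = 0. Proof. by rewrite circVr one0. Qed.

Lemma lamD a b c : lam A a (b + c) = lam A a b + lam A a c.
Proof. by rewrite /lam sbrace !addA. Qed.
Lemma lam0 a : lam A a 0 = 0. Proof. by rewrite /lam circ0 addNl. Qed.
Lemma lamN a b : lam A a (- b) = - lam A a b.
Proof. by apply: opp_uniq; rewrite -lamD addNr lam0. Qed.
Lemma lam1 c : lam A 0 c = c. Proof. by rewrite /lam circ0l opp0 add0r. Qed.
Lemma lam_circ a b c : lam A (a \o b) c = lam A a (lam A b c).
Proof. by rewrite [lam A b c]/lam lamD lamN /lam oppD oppK circA !addA addrK. Qed.
Lemma lamV b c : lam A (ginv b) (lam A b c) = c.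
Proof. by rewrite -lam_circ circVl one0 lam1. Qed.

Lemma AnnP z : reflect (forall b, [/\ lam A z b = b, z + b = b + z & z \o b = b \o z])
  (z \in Ann A).
Proof.
rewrite inE; apply: (iffP forallP) => h b.
  by case/and3P: (h b) => /eqP -> /eqP -> /eqP ->.
by case: (h b) => -> -> ->; rewrite !eqxx.
Qed.

Lemma Ann_addC z b : z \in Ann A -> z + b = b + z.
Proof. by move=> /AnnP h; case: (h b). Qed.

Lemma Ann_circ z b : z \in Ann A -> z \o b = z + b.
Proof. by move=> /AnnP h; case: (h b) => hl _ _; rewrite -{2}hl /lam addNKr. Qed.

Lemma Ann_lam a z : z \in Ann A -> lam A a z = z.
Proof.
move=> hz; have [_ _ hc] := elimT (AnnP z) hz a.
by rewrite /lam -hc Ann_circ // (Ann_addC a hz) addKr.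
Qed.

Lemma Ann0 : 0 \in Ann A.
Proof. by apply/AnnP => b; rewrite lam1 add0r addr0 circ0 circ0l. Qed.

Lemma AnnD z w : z \in Ann A -> w \in Ann A -> z + w \in Ann A.
Proof.
move=> hz hw; apply/AnnP => b.
have [l1 p1 c1] := elimT (AnnP _) hz b; have [l2 p2 c2] := elimT (AnnP _) hw b.
rewrite -Ann_circ // lam_circ l2 l1; split => //.
  by rewrite Ann_circ // -!addA p2 !addA p1.
by rewrite -circA c2 !circA c1.
Qed.

Lemma AnnN z : z \in Ann A -> - z \in Ann A.
Proof.
move=> hz; have e : ginv z = - z by apply: opp_uniq; rewrite -Ann_circ // circVr0.
rewrite -e; apply/AnnP => b; have [l1 p1 c1] := elimT (AnnP _) hz b.
split; [by rewrite -{1}l1 lamV | rewrite e; exact: addC_oppl | exact: circC_invl].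
Qed.

Lemma acosetP a x : reflect (exists2 z, z \in Ann A & x = a + z) (x \in acoset A a).
Proof. exact: (iffP imsetP). Qed.

Lemma mem_acoset a : a \in acoset A a.
Proof. by apply/acosetP; exists 0; rewrite ?addr0 ?Ann0. Qed.

Lemma acoset_eq a x : x \in acoset A a -> acoset A x = acoset A a.
Proof.
case/acosetP => z hz ->; apply/setP => y.
apply/acosetP/acosetP => -[w hw ->].
  by exists (z + w); rewrite ?AnnD ?addA.
by exists (- z + w); rewrite ?AnnD ?AnnN // -addA addNKr.
Qed.

Lemma card_acoset a : #|acoset A a| = #|Ann A|.
Proof. exact: card_imset (@addrI a). Qed.

Lemma quot_mem a : acoset A a \in quot A.
Proof. exact: imset_f. Qed.

Lemma acoset0_Ann a : acoset A a = acoset A 0 -> a \in Ann A.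
Proof.
by move=> h; have := mem_acoset a; rewrite h => /acosetP [z hz ->]; rewrite add0r.
Qed.

Lemma card_translate (S : {set T}) g : #|[set y + g | y in S]| = #|S|.
Proof. exact: card_imset (@addIr g). Qed.

Lemma lam_orbit_refl c : c \in lam_orbit A c.
Proof. by apply/imsetP; exists 0; rewrite ?lam1. Qed.

Lemma lam_orbit_eq c d : d \in lam_orbit A c -> lam_orbit A d = lam_orbit A c.
Proof.
case/imsetP => b _ ->; apply/setP => y; apply/imsetP/imsetP => -[a _ ->].
  by exists (a \o b); rewrite ?lam_circ.
by exists (a \o ginv b); rewrite ?lam_circ ?lamV.
Qed.

(* theta is an action of the semidirect product (A,+) x| (A,o). *)
Lemma theta_comp a b a0 b0 c :
  theta A a b (theta A a0 b0 c) = theta A (a + lam A b a0) (b \o b0) c.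
Proof.
by rewrite /theta (lamD b (a0 + lam A b0 c)) (lamD b a0) lamN lam_circ oppD !addA.
Qed.

Lemma theta_orbit_refl c : c \in theta_orbit A c.
Proof. by apply/imset2P; exists 0 0; rewrite // /theta lam1 add0r opp0 addr0. Qed.

Lemma theta_orbit_eq c d : d \in theta_orbit A c -> theta_orbit A d = theta_orbit A c.
Proof.
case/imset2P => a0 b0 _ _ ->; apply/setP => y.
apply/imset2P/imset2P => -[a b _ _ ->].
  by exists (a + lam A b a0) (b \o b0); rewrite ?theta_comp.
exists (a + - lam A (b \o ginv b0) a0) (b \o ginv b0) => //.
by rewrite theta_comp addrNK -circA circVl circ1r.
Qed.

Lemma lam_orbit_Ann c z : z \in Ann A ->
  lam_orbit A (c + z) = [set y + z | y in lam_orbit A c].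
Proof.
move=> hz; rewrite /lam_orbit -imset_comp; apply: eq_imset => a /=.
by rewrite lamD (Ann_lam _ hz).
Qed.

Lemma theta_orbit_Ann c z : z \in Ann A ->
  theta_orbit A (c + z) = [set y + z | y in theta_orbit A c].
Proof.
move=> hz; have thetaD a b : theta A a b (c + z) = theta A a b c + z.
  by rewrite /theta lamD (Ann_lam _ hz) -!addA (Ann_addC (- a) hz).
apply/setP => y; apply/imset2P/imsetP => [[a b _ _ ->] | [_ /imset2P [a b _ _ ->] ->]].
  by exists (theta A a b c); [exact: imset2_f | rewrite thetaD].
by exists a b; rewrite ?thetaD.
Qed.

Lemma card_lam_orbit_Ann c z : z \in Ann A -> #|lam_orbit A (c + z)| = #|lam_orbit A c|.
Proof. by move=> hz; rewrite lam_orbit_Ann // card_translate. Qed.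

Lemma card_theta_orbit_Ann c z : z \in Ann A ->
  #|theta_orbit A (c + z)| = #|theta_orbit A c|.
Proof. by move=> hz; rewrite theta_orbit_Ann // card_translate. Qed.

(* Orbit sizes through the brace operations: lambda_a(c) - c = a * c and
   theta_(a,b)(c) - c = [a, lambda_b(c)]_+ + b * c, so after translating by
   -c the orbits of c consist of elements of A'. *)
Lemma lam_orbit_star c :
  [set sstar A a c | a : T] = [set y + - c | y in lam_orbit A c].
Proof. by rewrite /lam_orbit -imset_comp. Qed.

Lemma theta_minus a b c : theta A a b c + - c = acomm A a (lam A b c) + sstar A b c.
Proof. by rewrite /acomm /sstar /theta; move: (lam A b c) => l; rewrite !addA addrNK. Qed.

Lemma theta_orbit_dec c :
  [set acomm A a (lam A b c) + sstar A b c | a : T, b : T]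
  = [set y + - c | y in theta_orbit A c].
Proof.
apply/setP => y; apply/imset2P/imsetP => [[a b _ _ ->] | [_ /imset2P [a b _ _ ->] ->]].
  by exists (theta A a b c); [exact: imset2_f | rewrite theta_minus].
by exists a b; rewrite ?theta_minus.
Qed.

Lemma derivedD x y : derived A x -> derived A y -> derived A (x + y).
Proof. by move=> hx hy S S0 SD SN SG; exact: SD (hx S S0 SD SN SG) (hy S S0 SD SN SG). Qed.

Lemma derived_star a b : derived A (sstar A a b).
Proof.
move=> S _ _ _ /subsetP; apply; rewrite inE.
by apply/existsP; exists a; apply/existsP; exists b; rewrite eqxx.
Qed.

Lemma derived_acomm a b : derived A (acomm A a b).
Proof.
move=> S _ _ _ /subsetP; apply; rewrite inE.
by apply/existsP; exists a; apply/existsP; exists b; rewrite eqxx orbT.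
Qed.

End SkewBraceTheory.

Section OrbitCounting.
Variables (T : finType) (O : T -> {set T}).
Hypotheses (O_refl : forall c, c \in O c) (O_eq : forall c d, d \in O c -> O d = O c).

Lemma partition_orbits (D : {set T}) :
  (forall c d, d \in O c -> (c \in D) = (d \in D)) -> partition (O @: D) D.
Proof.
move=> closedD; apply/and3P; split.
- apply/eqP/setP => x; apply/bigcupP/idP.
    by case=> _ /imsetP [c Dc ->] xc; rewrite -(closedD _ _ xc).
  by move=> Dx; exists (O x); [apply: imset_f | apply: O_refl].
- apply/trivIsetP => _ _ /imsetP [c _ ->] /imsetP [d _ ->] neq.
  apply: contraR neq => /pred0Pn [z /andP [zc zd]].
  by rewrite -(O_eq zc) -(O_eq zd).
- by apply/imsetP => -[c _ h]; have := O_refl c; rewrite -h inE.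
Qed.

Lemma card_orbit_size k : #|[set c | #|O c| == k]| = #|O @: [set c | #|O c| == k]| * k.
Proof.
apply: card_uniform_partition; first by move=> X /imsetP [c]; rewrite inE => /eqP hk ->.
by apply: partition_orbits => c d /O_eq h; rewrite !inE h.
Qed.

Definition nontrivial_orbits : {set {set T}} := [set O c | c in [pred c | 1 < #|O c|]].

Lemma nontrivial_orbits_size k : 1 < k ->
  #|[set L in nontrivial_orbits | #|L| == k]| * k = #|[set c | #|O c| == k]|.
Proof.
move=> k_gt1; rewrite card_orbit_size; congr (_ * _).
apply: eq_card => L; rewrite !inE; apply/andP/imsetP.
  by case=> /imsetP [c _ ->] /eqP hc; exists c; rewrite // inE hc.
case=> c; rewrite inE => /eqP hc ->; split; last by rewrite hc.
by apply/imsetP; exists c; rewrite // inE hc.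
Qed.

Lemma nontrivial_orbits_small k : k <= 1 -> [set L in nontrivial_orbits | #|L| == k] = set0.
Proof.
move=> k_le1; apply/setP => L; rewrite !inE; apply/negP => /andP [/imsetP [c hc ->] /eqP hk].
by move: hc; rewrite inE hk ltnNge k_le1.
Qed.

End OrbitCounting.

(* Two graphs whose adjacency only depends on the vertex sizes (as for
   orb_adj) are isomorphic as soon as they have the same number of
   vertices of each size: match the vertices of size k in enumeration order. *)
Lemma orb_graph_iso_by_size (TA TB : finType) (VA : {set {set TA}}) (VB : {set {set TB}}) :
  (forall k, #|[set L in VA | #|L| == k]| = #|[set L in VB | #|L| == k]|) ->
  orb_graph_iso VA VB.
Proof.
move=> hk.
pose SA (k : nat) := enum [set L in VA | #|L| == k].
pose SB (k : nat) := enum [set L in VB | #|L| == k].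
pose f (L : {set TA}) := nth set0 (SB #|L|) (index L (SA #|L|)).
have szAB k : size (SA k) = size (SB k) by rewrite -!cardE hk.
have memA L : L \in VA -> L \in SA #|L| by move=> hL; rewrite mem_enum inE hL eqxx.
have idxA L : L \in VA -> index L (SA #|L|) < size (SB #|L|).
  by move=> hL; rewrite -szAB index_mem memA.
have fP L : L \in VA -> f L \in SB #|L| by move=> hL; apply/mem_nth/idxA.
have fV L : L \in VA -> f L \in VB by move/fP; rewrite mem_enum inE => /andP [].
have fsize L : L \in VA -> #|f L| = #|L| by move/fP; rewrite mem_enum inE => /andP [_ /eqP].
have finj : {in VA &, injective f}.
  move=> L1 L2 h1 h2 e; have ec : #|L1| = #|L2| by rewrite -fsize // e fsize.
  have i1 := idxA _ h1; have i2 := idxA _ h2; rewrite ec in i1.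
  move: e; rewrite /f ec => /eqP; rewrite nth_uniq ?enum_uniq // => /eqP e.
  by rewrite -(nth_index set0 (memA _ h1)) ec e nth_index // memA.
exists f; split => //; last by move=> L1 L2 h1 h2; rewrite /orb_adj (inj_in_eq finj) // !fsize.
apply/setP => M; apply/imsetP/idP => [[L hL ->] | hM]; first exact: fV.
have MB : M \in SB #|M| by rewrite mem_enum inE hM eqxx.
pose L := nth set0 (SA #|M|) (index M (SB #|M|)).
have LA : L \in SA #|M| by apply: mem_nth; rewrite szAB index_mem.
move: (LA); rewrite mem_enum inE => /andP [hL /eqP hLk].
by exists L => //; rewrite /f hLk index_uniq ?enum_uniq ?szAB ?index_mem // nth_index.
Qed.

Lemma orbit_graph_iso (TA TB : finType) (OA : TA -> {set TA}) (OB : TB -> {set TB}) :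
  (forall c, c \in OA c) -> (forall c d, d \in OA c -> OA d = OA c) ->
  (forall c, c \in OB c) -> (forall c d, d \in OB c -> OB d = OB c) ->
  (forall k, #|[set c | #|OA c| == k]| = #|[set c | #|OB c| == k]|) ->
  orb_graph_iso (nontrivial_orbits OA) (nontrivial_orbits OB).
Proof.
move=> reflA eqA reflB eqB hk; apply: orb_graph_iso_by_size => k.
have [k_le1 | k_gt1] := leqP k 1.
  by rewrite (nontrivial_orbits_small OA k_le1) (nontrivial_orbits_small OB k_le1) !cards0.
apply/eqP; rewrite -(eqn_pmul2r (ltnW k_gt1)).
by rewrite (nontrivial_orbits_size reflA eqA k_gt1) (nontrivial_orbits_size reflB eqB k_gt1) hk.
Qed.

Lemma card_level_classes (T : finType) (A : skew_brace T) (s : T -> nat) k :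
  (forall c z, z \in Ann A -> s (sadd A c z) = s c) ->
  #|[set c | s c == k]| = #|acoset A @: [set c | s c == k]| * #|Ann A|.
Proof.
move=> s_inv; apply: card_uniform_partition.
  by move=> X /imsetP [c _ ->]; apply: card_acoset.
apply: partition_orbits; [exact: mem_acoset | exact: acoset_eq |].
by move=> c _ /acosetP [z hz ->]; rewrite !inE s_inv.
Qed.

Lemma card_quot (T : finType) (A : skew_brace T) : #|T| = #|quot A| * #|Ann A|.
Proof.
rewrite -cardsT (_ : setT = [set c : T | 0 == 0]); last by apply/setP => x; rewrite !inE.
rewrite (@card_level_classes _ A (fun=> 0)) //; congr (_ * _).
by apply: eq_card => X; apply/imsetP/imsetP => -[a _ ->]; exists a.
Qed.

Section Isoclinism.
Variables (TA TB : finType) (A : skew_brace TA) (B : skew_brace TB).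
Variables (xi : {set TA} -> {set TB}) (delta : TA -> TB).
Hypothesis xi_quot : forall X, X \in quot A -> xi X \in quot B.
Hypothesis xi_inj : {in quot A &, injective xi}.
Hypothesis xi_surj : forall Y, Y \in quot B -> exists2 X, X \in quot A & xi X = Y.
Hypothesis xi_hom : forall a b a1 b1, xi (acoset A a) = acoset B a1 ->
  xi (acoset A b) = acoset B b1 ->
  xi (acoset A (sadd A a b)) = acoset B (sadd B a1 b1)
  /\ xi (acoset A (scirc A a b)) = acoset B (scirc B a1 b1).
Hypothesis delta_inj : forall x y, derived A x -> derived A y -> delta x = delta y -> x = y.
Hypothesis delta_add : forall x y, derived A x -> derived A y ->
  delta (sadd A x y) = sadd B (delta x) (delta y).
Hypothesis xi_delta : forall a b a1 b1, xi (acoset A a) = acoset B a1 ->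
  xi (acoset A b) = acoset B b1 ->
  delta (acomm A a b) = acomm B a1 b1 /\ delta (sstar A a b) = sstar B a1 b1.

Local Notation "a ~ a1" := (xi (acoset A a) = acoset B a1) (at level 70).

Lemma xi_rep a : exists a1, a ~ a1.
Proof. by have /imsetP [a1 _ ->] := xi_quot (quot_mem A a); exists a1. Qed.

Lemma xi_pre a1 : exists a, a ~ a1.
Proof. by have [_ /imsetP [a _ ->] h] := xi_surj (quot_mem B a1); exists a. Qed.

Lemma xi_zero : szero A ~ szero B.
Proof.
have [e he] := xi_rep (szero A); have [hee _] := xi_hom he he.
rewrite sadd0l he in hee; have := mem_acoset B (sadd B e e).
rewrite -hee => /acosetP [z hz /addrI ez]; rewrite he.
by apply: acoset_eq; apply/acosetP; exists e; rewrite ?sadd0l // ez.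
Qed.

Lemma xi_opp b b1 : b ~ b1 -> sopp A b ~ sopp B b1.
Proof.
move=> hb; have [x hx] := xi_rep (sopp A b); have [hxb _] := xi_hom hx hb.
rewrite saddNl xi_zero in hxb; have /acoset0_Ann hz := esym hxb.
rewrite hx; apply: acoset_eq; apply/acosetP; exists (sadd B x b1) => //.
by rewrite -(Ann_addC _ hz) addrK.
Qed.

Lemma xi_lam b c b1 c1 : b ~ b1 -> c ~ c1 -> lam A b c ~ lam B b1 c1.
Proof.
move=> hb hc; have [_ hbc] := xi_hom hb hc.
by have [h _] := xi_hom (xi_opp hb) hbc.
Qed.

(* Corresponding points have lambda-orbits of the same size: both sizes
   count the elements a * c, which delta maps bijectively. *)
Lemma card_lam_orbit_xi c c1 : c ~ c1 -> #|lam_orbit A c| = #|lam_orbit B c1|.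
Proof.
move=> hc; rewrite -(card_translate A (lam_orbit A c) (sopp A c)).
rewrite -(card_translate B (lam_orbit B c1) (sopp B c1)) -!lam_orbit_star.
have -> : [set sstar B a1 c1 | a1 : TB] = delta @: [set sstar A a c | a : TA].
  apply/setP => y; apply/imsetP/imsetP => [[a1 _ ->] | [_ /imsetP [a _ ->] ->]].
    have [a ha] := xi_pre a1; exists (sstar A a c); first exact: imset_f.
    by have [_ ->] := xi_delta ha hc.
  by have [a1 ha] := xi_rep a; exists a1 => //; have [_ ->] := xi_delta ha hc.
rewrite card_in_imset // => _ _ /imsetP [a _ ->] /imsetP [b _ ->].
by apply: delta_inj; apply: derived_star.
Qed.

(* Same for theta-orbits, through theta_(a,b)(c) - c = [a, lambda_b c]_+ + b * c. *)
Lemma card_theta_orbit_xi c c1 : c ~ c1 -> #|theta_orbit A c| = #|theta_orbit B c1|.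
Proof.
move=> hc; rewrite -(card_translate A (theta_orbit A c) (sopp A c)).
rewrite -(card_translate B (theta_orbit B c1) (sopp B c1)) -!theta_orbit_dec.
set FA := fun a b => sadd A (acomm A a (lam A b c)) (sstar A b c).
have derFA a b : derived A (FA a b).
  by apply: derivedD; [apply: derived_acomm | apply: derived_star].
have deltaF a b a1 b1 : a ~ a1 -> b ~ b1 ->
    delta (FA a b) = sadd B (acomm B a1 (lam B b1 c1)) (sstar B b1 c1).
  move=> ha hb; rewrite delta_add //; [| exact: derived_acomm | exact: derived_star].
  by have [-> _] := xi_delta ha (xi_lam hb hc); have [_ ->] := xi_delta hb hc.
rewrite -[LHS](card_in_imset (f := delta)); last first.
  by move=> _ _ /imset2P [a b _ _ ->] /imset2P [a' b' _ _ ->]; apply: delta_inj; apply: derFA.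
apply: eq_card => y; apply/imsetP/imset2P => [[_ /imset2P [a b _ _ ->] ->] | [a1 b1 _ _ ->]].
  have [a1 ha] := xi_rep a; have [b1 hb] := xi_rep b.
  by exists a1 b1; rewrite ?(deltaF _ _ _ _ ha hb).
have [a ha] := xi_pre a1; have [b hb] := xi_pre b1.
by exists (FA a b); [exact: imset2_f | rewrite (deltaF _ _ _ _ ha hb)].
Qed.

(* Equal orders force equal annihilators, since A/Ann(A) and B/Ann(B) are
   in bijection through xi. *)
Lemma card_Ann_eq : #|TA| = #|TB| -> #|Ann A| = #|Ann B|.
Proof.
move=> hT; have hq : #|quot B| = #|quot A|.
  rewrite -(card_in_imset xi_inj); apply: eq_card => Y.
  apply/idP/imsetP => [/xi_surj [X hX <-] | [X hX ->]]; [by exists X | exact: xi_quot].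
have := card_quot B; rewrite -hT (card_quot A) hq => /eqP; rewrite eqn_mul2l.
case/orP => [/eqP q0 | /eqP //].
by have := card0_eq q0 (acoset A (szero A)); rewrite quot_mem.
Qed.

Lemma card_level_xi (sA : TA -> nat) (sB : TB -> nat) k :
  #|TA| = #|TB| ->
  (forall c z, z \in Ann A -> sA (sadd A c z) = sA c) ->
  (forall c z, z \in Ann B -> sB (sadd B c z) = sB c) ->
  (forall c c1, c ~ c1 -> sA c = sB c1) ->
  #|[set c | sA c == k]| = #|[set c | sB c == k]|.
Proof.
move=> hT invA invB hAB.
rewrite (card_level_classes _ invA) (card_level_classes _ invB) (card_Ann_eq hT).
congr (_ * _); rewrite -(card_in_imset (f := xi)); last first.
  by move=> X Y /imsetP [a _ ->] /imsetP [b _ ->]; apply: xi_inj; apply: quot_mem.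
apply: eq_card => Y; apply/imsetP/imsetP => [[_ /imsetP [c hk ->] ->] | [c1 hk ->]].
  have [c1 hc] := xi_rep c; exists c1 => //.
  by move: hk; rewrite !inE (hAB _ _ hc).
have [c hc] := xi_pre c1; exists (acoset A c); last by rewrite hc.
by apply: imset_f; move: hk; rewrite !inE (hAB _ _ hc).
Qed.

End Isoclinism.

Theorem mainTheorem8 (TA TB : finType) (A : skew_brace TA) (B : skew_brace TB) :
  #|TA| = #|TB| -> isoclinic A B ->
  orb_graph_iso (LambdaV A) (LambdaV B) /\ orb_graph_iso (ThetaV A) (ThetaV B).
Proof.
move=> hT [xi [delta [[xq xinj xsurj xhom] [_ dinj _ dadd] compat]]].
have level k := card_level_xi xq xinj xsurj k hT.
split.
- apply: (orbit_graph_iso (lam_orbit_refl A) (@lam_orbit_eq _ A)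
    (lam_orbit_refl B) (@lam_orbit_eq _ B)) => k.
  apply: level; [exact: card_lam_orbit_Ann | exact: card_lam_orbit_Ann |].
  exact: card_lam_orbit_xi xq xsurj dinj compat.
- apply: (orbit_graph_iso (theta_orbit_refl A) (@theta_orbit_eq _ A)
    (theta_orbit_refl B) (@theta_orbit_eq _ B)) => k.
  apply: level; [exact: card_theta_orbit_Ann | exact: card_theta_orbit_Ann |].
  exact: card_theta_orbit_xi xq xsurj xhom dinj dadd compat.
Qed.
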